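(* Let $\alpha,\beta$ be relatively prime positive integers and let $n$ be a positive integer with $s(n)=s$. Then there exist no integers $a',b'\ge1$ with $n=a'g_s+\beta b'g_{s-1}$. Moreover, a pair $(b,a)$ is $n$-good if and only if $n=ag_{s-1}+\beta b g_{s-2}$ and $a,b\ge1$.
   Context: The $(\alpha,\beta)$-walk $w_k(a_1,a_2)$ for positive integers $a_1,a_2$ is given by $w_1=a_1$, $w_2=a_2$, $w_{k+2}=\alpha w_{k+1}+\beta w_k$ ($k\ge1$). For a positive integer $n$, $s(n;a_1,a_2)$ is the (largest) index $s$ with $w_s(a_1,a_2)=n$ ($-\infty$ if none), and $s(n)=\max_{a_1,a_2\ge1}s(n;a_1,a_2)$. A pair $(a_1,a_2)$ with $a_1,a_2\ge1$ is $n$-good if $s(n;a_1,a_2)=s(n)$. The sequence $g_k$: $g_0=0$, $g_1=1$, $g_2=\alpha$, $g_{k+2}=\alpha g_{k+1}+\beta g_k$ for $k\ge1$. *)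

From mathcomp Require Import all_boot.
Set Implicit Arguments. Unset Strict Implicit. Unset Printing Implicit Defensive.

(* Consecutive pairs (w_{k+1}, w_{k+2}) of the (alpha,beta)-walk. *)
Fixpoint walk_pair (alpha beta a1 a2 k : nat) : nat * nat :=
  match k with
  | 0 => (a1, a2)
  | k'.+1 => let: (x, y) := walk_pair alpha beta a1 a2 k' in
             (y, alpha * y + beta * x)
  end.

(* w_k(a1,a2) for k >= 1: w_1 = a1, w_2 = a2, w_{k+2} = alpha w_{k+1} + beta w_k.
   (The value at k = 0 is irrelevant and never used.) *)
Definition walk (alpha beta a1 a2 k : nat) : nat :=
  (walk_pair alpha beta a1 a2 k.-1).1.

(* g_0 = 0, g_1 = 1, g_2 = alpha, g_{k+2} = alpha g_{k+1} + beta g_k. *)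
Definition g (alpha beta k : nat) : nat := (walk_pair alpha beta 0 1 k).1.

Definition s_pair_is (alpha beta n a1 a2 t : nat) : Prop :=
  1 <= t /\ walk alpha beta a1 a2 t = n /\
  (forall k, 1 <= k -> walk alpha beta a1 a2 k = n -> k <= t).

(* s(n) = s : the maximum of s(n; a1, a2) over all a1, a2 >= 1
   (pairs with s(n;a1,a2) = -oo contribute nothing). *)
Definition s_is (alpha beta n s : nat) : Prop :=
  (exists a1 a2, 1 <= a1 /\ 1 <= a2 /\ s_pair_is alpha beta n a1 a2 s) /\
  (forall a1 a2 t, 1 <= a1 -> 1 <= a2 -> s_pair_is alpha beta n a1 a2 t -> t <= s).

Definition n_good (alpha beta n a1 a2 : nat) : Prop :=
  1 <= a1 /\ 1 <= a2 /\
  exists s, s_is alpha beta n s /\ s_pair_is alpha beta n a1 a2 s.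

From mathcomp Require Import all_boot.
From mathcomp Require Import zify.

Set Implicit Arguments.
Unset Strict Implicit.
Unset Printing Implicit Defensive.

(* Every walk is a linear combination of the fundamental walk g:
   w_k(a1, a2) = a2 g_(k-1) + beta a1 g_(k-2) for k >= 2.  For positive
   alpha, beta and positive starting values the walk is strictly increasing
   from index 2 on, so s(n; a1, a2) is simply the index t >= 2 with
   w_t(a1, a2) = n.  Taking (a1, a2) = (1, n) gives s(n) >= 2.  A
   representation n = a' g_s + beta b' g_(s-1) would say w_(s+1)(b', a') = n,
   contradicting the maximality of s; and (b, a) is n-good exactly when
   w_s(b, a) = n, which is the second claim. *)

Section Walks.
Variables alpha beta : nat.

Lemma g_rec k : g alpha beta k.+2 = alpha * g alpha beta k.+1 + beta * g alpha beta k.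
Proof. by rewrite /g /=; case: (walk_pair alpha beta 0 1 k). Qed.

Lemma walk_pairS a1 a2 k : walk_pair alpha beta a1 a2 k.+1 =
  let: (x, y) := walk_pair alpha beta a1 a2 k in (y, alpha * y + beta * x).
Proof. by []. Qed.

Lemma walk_pairE a1 a2 k : walk_pair alpha beta a1 a2 k.+1 =
  (a2 * g alpha beta k.+1 + beta * a1 * g alpha beta k,
   a2 * g alpha beta k.+2 + beta * a1 * g alpha beta k.+1).
Proof.
elim: k => [|k IHk]; first by rewrite /g /=; congr pair; lia.
rewrite walk_pairS IHk !g_rec; congr pair; lia.
Qed.

Lemma walk_g a1 a2 k : 2 <= k ->
  walk alpha beta a1 a2 k =
    a2 * g alpha beta (k - 1) + beta * a1 * g alpha beta (k - 2).
Proof.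
by case: k => [|[|k]] // _; rewrite /walk walk_pairE !subSS !subn0.
Qed.

Lemma walk_rec a1 a2 k :
  walk alpha beta a1 a2 k.+3 =
    alpha * walk alpha beta a1 a2 k.+2 + beta * walk alpha beta a1 a2 k.+1.
Proof. by rewrite /walk /=; case: (walk_pair alpha beta a1 a2 k). Qed.

Hypotheses (alpha_gt0 : 0 < alpha) (beta_gt0 : 0 < beta).

Section PositiveStart.
Variables a1 a2 : nat.
Hypotheses (a1_gt0 : 0 < a1) (a2_gt0 : 0 < a2).

Lemma walk_gt0 k : 0 < walk alpha beta a1 a2 k.+1.
Proof.
elim: k {-2}k (leqnn k) => [|m IHm] [|[|k]] // hk; rewrite walk_rec.
by have := IHm k.+1 hk; nia.
Qed.

Lemma walk_increasing : {homo (fun k => walk alpha beta a1 a2 k.+2) : i j / i < j}.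
Proof.
apply: homo_ltn => [y x z|k]; first exact: ltn_trans.
by rewrite /= walk_rec; have := walk_gt0 k.+1; have := walk_gt0 k; nia.
Qed.

Lemma s_pair_isP n t : 2 <= t ->
  s_pair_is alpha beta n a1 a2 t <-> walk alpha beta a1 a2 t = n.
Proof.
move=> t_ge2; split=> [[_ []] // | wt]; split; first exact: ltnW.
split=> // k _ wk; rewrite leqNgt; apply/negP => t_lt_k.
move: t_ge2 wt t_lt_k wk; case: t => [|[|t]] // _ wt.
case: k => [|[|k]] // t_lt_k wk.
by have := @walk_increasing t k t_lt_k; rewrite /= wt wk ltnn.
Qed.

End PositiveStart.
End Walks.

Lemma s_is_uniq alpha beta n s s' :
  s_is alpha beta n s -> s_is alpha beta n s' -> s = s'.
Proof.
move=> [[a1 [a2 [a1_gt0 [a2_gt0 ps]]]] smax] [[b1 [b2 [b1_gt0 [b2_gt0 ps']]]] smax'].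
by apply/eqP; rewrite eqn_leq (smax' _ _ _ a1_gt0 a2_gt0 ps) (smax _ _ _ b1_gt0 b2_gt0 ps').
Qed.

Theorem corollary2p3 (alpha beta n s : nat) :
  0 < alpha -> 0 < beta -> coprime alpha beta -> 0 < n ->
  s_is alpha beta n s ->
  (~ exists a' b', 1 <= a' /\ 1 <= b' /\
       n = a' * g alpha beta s + beta * b' * g alpha beta (s - 1)) /\
  (forall a b, n_good alpha beta n b a <->
     (n = a * g alpha beta (s - 1) + beta * b * g alpha beta (s - 2) /\
      1 <= a /\ 1 <= b)).
Proof.
move=> alpha_gt0 beta_gt0 _ n_gt0 sn; have [_ smax] := sn.
have s_ge2 : 2 <= s.
  by apply: (smax 1 n) => //; apply/s_pair_isP.
split.
  move=> [a' [b' [a'_gt0 [b'_gt0 nE]]]].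
  have w_next : walk alpha beta b' a' s.+1 = n.
    by rewrite nE walk_g ?leqW // !subSS subn0.
  have := smax b' a' s.+1 b'_gt0 a'_gt0.
  rewrite (s_pair_isP alpha_gt0 beta_gt0 b'_gt0 a'_gt0 n (leqW s_ge2)) ltnn.
  by move=> /(_ w_next).
move=> a b; rewrite -walk_g //; split.
  move=> [b_gt0 [a_gt0 [s' [sn' ps']]]].
  rewrite -(s_is_uniq sn sn') in ps'.
  by rewrite (s_pair_isP alpha_gt0 beta_gt0 b_gt0 a_gt0 n s_ge2) in ps'.
move=> [wn [a_gt0 b_gt0]]; split=> //; split=> //; exists s; split=> //.
exact/s_pair_isP.
Qed.
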